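(* For all $A,r\in\mathbb{N}$ and $\varepsilon>0$ there are $\delta>0$ and $S>0$ such that the following holds. Let $n_1,\ldots,n_r$ be positive integers with $n_i\leq An_j$ for all $i,j$, and let $\Lambda=(\lambda_{i,j})$ be a symmetric non-negative $r\times r$ matrix that is $\varepsilon$-separated and connected. Let $D=\mathrm{diag}(n_1,\ldots,n_r)$, let $y_1,\ldots,y_r$ be an orthonormal basis of $\mathbb{R}^r$ of eigenvectors of $\Lambda$ with eigenvalues $\theta_1\geq\cdots\geq\theta_r$ (so $y_1$ is the Perron–Frobenius eigenvector, chosen with non-negative entries), and let $x_j=D^{-1/2}y_j$. Let $\vec z\in[0,\infty)^r$ and write $\vec z=\sum_j\alpha_jx_j$. Then: (1) $\|\alpha_1x_1\|_2\geq\delta\|\vec z\|_2$; (2) for all $j$, $\|\alpha_jx_j\|_2\leq S\|\vec z\|_2$.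
   Context: $\Lambda$ is $\varepsilon$-separated if for all $i,j$ either $\lambda_{i,j}=0$ or $\varepsilon\leq\lambda_{i,j}\leq 1/\varepsilon$; connected if the graph on $[r]$ with edges $\{i,j\}$ for $\lambda_{i,j}>0$ is connected. The vectors $x_j$ are eigenvectors of $M$, $M_{i,j}=\lambda_{i,j}n_j/\sqrt{n_in_j}$. *)

From HB Require Import structures.
From mathcomp Require Import all_boot all_order all_algebra.
From mathcomp Require Import reals.
Set Implicit Arguments. Unset Strict Implicit. Unset Printing Implicit Defensive.
Import Order.TTheory GRing.Theory Num.Theory.
Local Open Scope ring_scope.

Definition norm2 {R : realType} {r : nat} (v : 'cV[R]_r) : R :=
  Num.sqrt (\sum_(k < r) v k 0 ^+ 2).

Definition eps_separated {R : realType} {r : nat} (eps : R) (L : 'M[R]_r) : Prop :=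
  forall i j, L i j = 0 \/ (eps <= L i j /\ L i j <= eps^-1).

Definition lam_graph {R : realType} {r : nat} (L : 'M[R]_r) : rel 'I_r :=
  fun i j => 0 < L i j.

Definition lam_connected {R : realType} {r : nat} (L : 'M[R]_r) : Prop :=
  forall i j : 'I_r, connect (lam_graph L) i j.

Definition xvec {R : realType} {r : nat} (n : 'I_r -> nat) (y : 'cV[R]_r) : 'cV[R]_r :=
  \col_k (y k 0 / Num.sqrt (n k)%:R).

From HB Require Import structures.
From mathcomp Require Import all_boot all_order all_algebra.
From mathcomp Require Import reals ring lra zify.
Set Implicit Arguments. Unset Strict Implicit. Unset Printing Implicit Defensive.
Import Order.TTheory GRing.Theory Num.Theory.
Local Open Scope ring_scope.

(* Put w = D^{1/2} z = sum_j alpha_j y_j.  By orthonormality alpha_j = <w, y_j>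
   and sum_j alpha_j^2 = |w|^2, while |alpha_j x_j|^2 = alpha_j^2 |D^{-1/2} y_j|^2;
   since the n_k agree up to the factor A, this gives the upper bound.  For the
   lower bound: the Perron eigenvalue is at most r/eps, so along an edge of the
   connected graph of Lambda the entries of y_1 shrink by at most eps^2/r; hence
   every entry of y_1 is a fixed fraction of 1/sqrt r.  As w >= 0, the
   coefficient alpha_1 = <w, y_1> is then comparable to |w|, and
   |x_1|^2 |w|^2 >= |z|^2 / A. *)

Lemma sqr_sum_ge_sum_sqr (R : numDomainType) (I : finType) (F : I -> R) :
  (forall k, 0 <= F k) -> \sum_k F k ^+ 2 <= (\sum_k F k) ^+ 2.
Proof.
move=> F_ge0; rewrite [leRHS]expr2 mulr_suml; apply: ler_sum => k _.
by rewrite expr2 ler_wpM2l // (bigD1 k) //= lerDl sumr_ge0.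
Qed.

Lemma pmul_sqrtr (R : rcfType) (d a : R) :
  0 <= d -> d * Num.sqrt a = Num.sqrt (d ^+ 2 * a).
Proof. by move=> d_ge0; rewrite sqrtrM ?sqr_ge0 // sqrtr_sqr ger0_norm. Qed.

Lemma path_ratio_bound (R : numDomainType) (T : finType) (e : rel T)
    (Y : T -> R) (q : R) :
  (forall k, 0 <= Y k) -> 0 <= q -> q <= 1 ->
  (forall k l, e k l -> q * Y l <= Y k) ->
  forall k l, connect e k l -> q ^+ #|T|.-1 * Y l <= Y k.
Proof.
move=> Y_ge0 q_ge0 q_le1 edge k l /connectP[p e_p ->{l}].
case: (shortenP e_p) => p' e_p' uniq_p' _.
have size_p' : (size p' <= #|T|.-1)%N.
  have := max_card (mem (k :: p')); move/card_uniqP: uniq_p' => -> /=; lia.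
apply: le_trans (_ : q ^+ size p' * Y (last k p') <= Y k).
  by rewrite ler_wpM2r ?ler_wiXn2l //.
elim: p' k {e_p uniq_p' size_p'} e_p' => [|l p' IH] k /=; first by rewrite mul1r.
case/andP=> e_kl e_p'; rewrite exprS -mulrA; apply: le_trans (edge k l e_kl).
by rewrite ler_wpM2l // IH.
Qed.

Definition sqnorm (R : pzSemiRingType) (r : nat) (v : 'cV[R]_r) : R :=
  \sum_k v k 0 ^+ 2.

Section Orthonormal.
Variables (R : comNzRingType) (r m : nat) (y : 'I_m -> 'cV[R]_r).
Hypothesis y_orthonormal : forall i j, \sum_(k < r) y i k 0 * y j k 0 = (i == j)%:R.

Lemma orthonormal_coef (alpha : 'I_m -> R) w :
  w = \sum_j alpha j *: y j -> forall i, alpha i = \sum_k w k 0 * y i k 0.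
Proof.
move=> -> i; symmetry.
transitivity (\sum_j alpha j * \sum_k y j k 0 * y i k 0).
  under eq_bigr do rewrite summxE mulr_suml.
  rewrite exchange_big /=; apply: eq_bigr => j _; rewrite mulr_sumr.
  by apply: eq_bigr => k _; rewrite mxE mulrA.
under eq_bigr do rewrite y_orthonormal.
rewrite (bigD1 i) //= eqxx mulr1 big1 ?addr0 // => j /negbTE ->.
by rewrite mulr0.
Qed.

Lemma orthonormal_sqnorm j : sqnorm (y j) = 1.
Proof.
transitivity (\sum_k y j k 0 * y j k 0); last by rewrite y_orthonormal eqxx.
by apply: eq_bigr => k _; rewrite expr2.
Qed.

Lemma orthonormal_parseval (alpha : 'I_m -> R) w :
  w = \sum_j alpha j *: y j -> \sum_j alpha j ^+ 2 = sqnorm w.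
Proof.
move=> w_def; have coef := orthonormal_coef w_def.
transitivity (\sum_j alpha j * \sum_k w k 0 * y j k 0).
  by apply: eq_bigr => j _; rewrite -coef expr2.
under eq_bigr do rewrite mulr_sumr.
rewrite exchange_big /=; apply: eq_bigr => k _.
rewrite expr2 {2}w_def summxE mulr_suml; apply: eq_bigr => j _.
by rewrite mxE; ring.
Qed.
End Orthonormal.

Lemma norm2E (R : realType) r (v : 'cV[R]_r) : norm2 v = Num.sqrt (sqnorm v).
Proof. by []. Qed.

Lemma sqnorm_ge0 (R : realDomainType) r (v : 'cV[R]_r) : 0 <= sqnorm v.
Proof. by apply: sumr_ge0 => k _; apply: sqr_ge0. Qed.

Lemma sqnormZ (R : comPzSemiRingType) r (a : R) (v : 'cV[R]_r) :
  sqnorm (a *: v) = a ^+ 2 * sqnorm v.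
Proof. by rewrite /sqnorm mulr_sumr; apply: eq_bigr => k _; rewrite mxE exprMn. Qed.

Section DiagonalScaling.
Variables (R : realType) (r : nat) (n : 'I_r -> nat).

Definition sqrt_diag : 'M[R]_r := diag_mx (\row_k Num.sqrt (n k)%:R).

Lemma sqrt_diag_mulE (v : 'cV[R]_r) k :
  (sqrt_diag *m v) k 0 = Num.sqrt (n k)%:R * v k 0.
Proof. by rewrite mul_diag_mx !mxE. Qed.

Lemma sqnorm_sqrt_diag (v : 'cV[R]_r) :
  sqnorm (sqrt_diag *m v) = \sum_k (n k)%:R * v k 0 ^+ 2.
Proof.
by apply: eq_bigr => k _; rewrite sqrt_diag_mulE exprMn sqr_sqrtr ?ler0n.
Qed.

Lemma sqnorm_xvec (y : 'cV[R]_r) :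
  sqnorm (xvec n y) = \sum_k y k 0 ^+ 2 / (n k)%:R.
Proof.
by apply: eq_bigr => k _; rewrite mxE expr_div_n sqr_sqrtr ?ler0n.
Qed.

Hypothesis n_gt0 : forall k, (0 < n k)%N.

Lemma sqrt_diag_xvec (y : 'cV[R]_r) : sqrt_diag *m xvec n y = y.
Proof.
apply/matrixP => k j; rewrite ord1 sqrt_diag_mulE mxE mulrC divfK //.
by rewrite sqrtr_eq0 -ltNge ltr0n.
Qed.

Variables (A : nat) (y : 'cV[R]_r).
Hypothesis y_unit : sqnorm y = 1.

Lemma nat_mul_sqnorm_xvec_le l :
  (forall k, (n l <= A * n k)%N) -> (n l)%:R * sqnorm (xvec n y) <= A%:R.
Proof.
move=> n_le; apply: (@le_trans _ _ (A%:R * sqnorm y)); last by rewrite y_unit mulr1.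
rewrite sqnorm_xvec !mulr_sumr; apply: ler_sum => k _.
rewrite mulrCA mulrC ler_wpM2r ?sqr_ge0 //.
by rewrite ler_pdivrMr ?ltr0n // -natrM ler_nat.
Qed.

Lemma nat_mul_sqnorm_xvec_ge l :
  (forall k, (n k <= A * n l)%N) -> 1 <= A%:R * ((n l)%:R * sqnorm (xvec n y)).
Proof.
move=> n_le; rewrite -[leLHS]y_unit sqnorm_xvec !mulr_sumr.
apply: ler_sum => k _; rewrite mulrA mulrCA -[leLHS]mulr1 ler_wpM2l ?sqr_ge0 //.
by rewrite ler_pdivlMr ?ltr0n // mul1r -natrM ler_nat.
Qed.

End DiagonalScaling.

Arguments sqrt_diag {R r} n.

Section Components.
Variables (R : realType) (r A : nat) (n : 'I_r -> nat).
Variables (y : 'I_r -> 'cV[R]_r) (z : 'cV[R]_r) (alpha : 'I_r -> R).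
Hypothesis n_gt0 : forall k, (0 < n k)%N.
Hypothesis n_balanced : forall i j, (n i <= A * n j)%N.
Hypothesis y_orthonormal : forall i j, \sum_(k < r) y i k 0 * y j k 0 = (i == j)%:R.
Hypothesis z_expansion : z = \sum_j alpha j *: xvec n (y j).

Lemma sqrt_diag_expansion : sqrt_diag n *m z = \sum_j alpha j *: y j.
Proof.
rewrite z_expansion mulmx_sumr; apply: eq_bigr => j _.
by rewrite -scalemxAr sqrt_diag_xvec.
Qed.

Lemma sqr_coef_le j : alpha j ^+ 2 <= \sum_k (n k)%:R * z k 0 ^+ 2.
Proof.
rewrite -sqnorm_sqrt_diag -(orthonormal_parseval y_orthonormal sqrt_diag_expansion).
by rewrite (bigD1 j) //= lerDl sumr_ge0 // => i _; apply: sqr_ge0.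
Qed.

Lemma sqnorm_component_le j :
  sqnorm (alpha j *: xvec n (y j)) <= A%:R * sqnorm z.
Proof.
rewrite sqnormZ; apply: le_trans (ler_wpM2r (sqnorm_ge0 _) (sqr_coef_le j)) _.
rewrite mulr_suml [leRHS]mulr_sumr; apply: ler_sum => k _.
have y_unit := orthonormal_sqnorm y_orthonormal j.
have := nat_mul_sqnorm_xvec_le n_gt0 y_unit (fun l => n_balanced k l).
have := sqr_ge0 (z k 0); nra.
Qed.

Lemma sqnorm_component_ge i (c : R) :
    (forall k, 0 <= y i k 0) -> (forall k, c ^+ 2 <= r%:R * y i k 0 ^+ 2) ->
    (forall k, 0 <= z k 0) ->
  c ^+ 2 * sqnorm z <= (r * A)%:R * sqnorm (alpha i *: xvec n (y i)).
Proof.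
move=> y_ge0 c_le z_ge0.
set w := sqrt_diag n *m z.
have w_ge0 k : 0 <= w k 0 by rewrite sqrt_diag_mulE mulr_ge0 ?sqrtr_ge0.
have coef_ge : c ^+ 2 * sqnorm w <= r%:R * alpha i ^+ 2.
  rewrite (orthonormal_coef y_orthonormal sqrt_diag_expansion i).
  apply: le_trans (_ : r%:R * \sum_k (w k 0 * y i k 0) ^+ 2 <= _); last first.
    by rewrite ler_wpM2l // sqr_sum_ge_sum_sqr // => k; apply: mulr_ge0.
  rewrite /sqnorm !mulr_sumr; apply: ler_sum => k _.
  by have := c_le k; have := sqr_ge0 (w k 0); rewrite exprMn; nra.
set T := sqnorm (xvec n (y i)).
have T_ge k : 1 <= A%:R * ((n k)%:R * T).
  exact: nat_mul_sqnorm_xvec_ge (orthonormal_sqnorm y_orthonormal i) _ _.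
have z_le : sqnorm z <= sqnorm w * (A%:R * T).
  rewrite sqnorm_sqrt_diag mulr_suml; apply: ler_sum => k _.
  by have := T_ge k; have := sqr_ge0 (z k 0); nra.
have AT_ge0 : 0 <= A%:R * T by rewrite mulr_ge0 ?ler0n ?sqnorm_ge0.
apply: le_trans (ler_wpM2l (sqr_ge0 c) z_le) _.
rewrite [leLHS]mulrA; apply: le_trans (ler_wpM2r AT_ge0 coef_ge) _.
by rewrite sqnormZ -/T natrM mulrACA.
Qed.
End Components.

(* Capped at 1 so that its powers decrease with the length of a path. *)
Definition perron_ratio (R : realType) (r : nat) (eps : R) : R :=
  Num.min 1 (eps ^+ 2 / r.+1%:R).

Lemma perron_ratio_gt0 (R : realType) r (eps : R) : 0 < eps -> 0 < perron_ratio r eps.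
Proof. by move=> eps_gt0; rewrite lt_min ltr01 divr_gt0 ?exprn_gt0 ?ltr0Sn. Qed.

Lemma perron_ratio_le1 (R : realType) r (eps : R) : perron_ratio r eps <= 1.
Proof. by rewrite ge_min lexx. Qed.

Section PerronVector.
Variables (R : realType) (r : nat) (eps : R) (L : 'M[R]_r) (Y : 'cV[R]_r) (theta : R).
Hypotheses (eps_gt0 : 0 < eps) (L_sep : eps_separated eps L).
Hypotheses (Y_ge0 : forall k, 0 <= Y k 0) (Y_eigen : L *m Y = theta *: Y).

Lemma eps_separated_ge0 k l : 0 <= L k l.
Proof.
by case: (L_sep k l) => [->|[eps_le _]] //; apply: le_trans (ltW eps_gt0) eps_le.
Qed.

Lemma eps_separated_le k l : L k l <= eps^-1.
Proof. by case: (L_sep k l) => [->|[]//]; rewrite invr_ge0 ltW. Qed.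

Lemma eigen_entry k : \sum_l L k l * Y l 0 = theta * Y k 0.
Proof. by have := congr1 (fun M : 'cV_r => M k 0) Y_eigen; rewrite !mxE. Qed.

Lemma perron_eigenvalue_le : Y != 0 -> theta <= r%:R / eps.
Proof.
move=> Y_neq0; have sumY_gt0 : 0 < \sum_k Y k 0.
  rewrite lt_def sumr_ge0 // andbT; apply: contraNneq Y_neq0 => sumY0.
  by apply/eqP/matrixP => k j; rewrite ord1 mxE (psumr_eq0P _ sumY0).
rewrite -(ler_pM2r sumY_gt0) mulr_sumr.
under eq_bigr do rewrite -eigen_entry.
rewrite exchange_big mulr_sumr /=; apply: ler_sum => l _.
rewrite -mulr_suml ler_wpM2r //.
apply: le_trans (_ : \sum_(k < r) eps^-1 <= _).
  by apply: ler_sum => k _; apply: eps_separated_le.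
by rewrite sumr_const card_ord [leRHS]mulrC mulr_natr.
Qed.

Lemma perron_edge k l : 0 < L k l -> eps ^+ 2 * Y l 0 <= r%:R * Y k 0.
Proof.
move=> L_kl; have [->|Y_neq0] := eqVneq Y 0; first by rewrite !mxE !mulr0.
have eps_le : eps <= L k l.
  by case: (L_sep k l) => [L0|[]//]; rewrite L0 ltxx in L_kl.
have via_edge : eps * Y l 0 <= theta * Y k 0.
  rewrite -eigen_entry; apply: le_trans (_ : L k l * Y l 0 <= _).
    exact: ler_wpM2r.
  rewrite (bigD1 l) //= lerDl sumr_ge0 // => l' _.
  by rewrite mulr_ge0 ?eps_separated_ge0.
have := ler_wpM2r (Y_ge0 k) (perron_eigenvalue_le Y_neq0).
move/(le_trans via_edge)/(ler_wpM2l (ltW eps_gt0)).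
have -> : eps * (r%:R / eps * Y k 0) = r%:R * Y k 0 by field; rewrite gt_eqF.
by rewrite mulrA -expr2.
Qed.

Lemma perron_ratio_edge k l : 0 < L k l -> perron_ratio r eps * Y l 0 <= Y k 0.
Proof.
move=> L_kl; apply: le_trans (_ : eps ^+ 2 / r.+1%:R * Y l 0 <= _).
  by rewrite ler_wpM2r // ge_min lexx orbT.
rewrite mulrAC ler_pdivrMr ?ltr0Sn //; apply: le_trans (perron_edge L_kl) _.
by rewrite mulrC ler_wpM2l // ler_nat.
Qed.

Hypothesis L_connected : lam_connected L.

Lemma perron_entries_comparable k l :
  perron_ratio r eps ^+ r.-1 * Y l 0 <= Y k 0.
Proof.
rewrite -[X in _ ^+ X.-1](card_ord r).
apply: (path_ratio_bound (Y := fun k => Y k 0) Y_ge0 _ _ _ (L_connected k l)).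
- exact: ltW (perron_ratio_gt0 r eps_gt0).
- exact: perron_ratio_le1.
- exact: perron_ratio_edge.
Qed.

Lemma unit_perron_entry_ge : sqnorm Y = 1 ->
  forall k, (perron_ratio r eps ^+ r.-1) ^+ 2 <= r%:R * Y k 0 ^+ 2.
Proof.
move=> Y_unit k; apply: le_trans (_ : \sum_(l < r) Y k 0 ^+ 2 <= _); last first.
  by rewrite sumr_const card_ord mulr_natl.
have Q_ge0 : 0 <= perron_ratio r eps ^+ r.-1.
  by rewrite exprn_ge0 // ltW // perron_ratio_gt0.
rewrite -[leLHS]mulr1 -Y_unit mulr_sumr; apply: ler_sum => l _.
by rewrite -exprMn !expr2 ler_pM ?mulr_ge0 ?perron_entries_comparable.
Qed.
End PerronVector.

Theorem lemma2p2 (R : realType) (A r : nat) (eps : R) (heps : 0 < eps) :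
  exists (delta S : R), 0 < delta /\ 0 < S /\
  forall (n : 'I_r -> nat) (L : 'M[R]_r) (y : 'I_r -> 'cV[R]_r)
         (theta : 'I_r -> R) (z : 'cV[R]_r) (alpha : 'I_r -> R),
    (forall i, (0 < n i)%N) ->
    (forall i j, (n i <= A * n j)%N) ->
    L^T = L ->
    (forall i j, 0 <= L i j) ->
    eps_separated eps L ->
    lam_connected L ->
    (* y_1, ..., y_r orthonormal basis of eigenvectors of L *)
    (forall i j, \sum_(k < r) y i k 0 * y j k 0 = (i == j)%:R) ->
    (forall j, L *m y j = theta j *: y j) ->
    (forall i j : 'I_r, (i <= j)%N -> theta j <= theta i) ->
    (* y_1 is the Perron-Frobenius eigenvector, with non-negative entries *)
    (forall i : 'I_r, val i = 0%N -> forall k, 0 <= y i k 0) ->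
    (forall k, 0 <= z k 0) ->
    z = \sum_(j < r) alpha j *: xvec n (y j) ->
    (forall i : 'I_r, val i = 0%N ->
       delta * norm2 z <= norm2 (alpha i *: xvec n (y i))) /\
    (forall j, norm2 (alpha j *: xvec n (y j)) <= S * norm2 z).
Proof.
set Q := perron_ratio r eps ^+ r.-1.
have Q_gt0 : 0 < Q by rewrite exprn_gt0 // perron_ratio_gt0.
exists (Q / (r + A).+1%:R), A.+1%:R.
split; first by rewrite divr_gt0 ?ltr0Sn.
split; first exact: ltr0Sn.
move=> n L y theta z alpha n_gt0 n_bal _ _ L_sep L_conn y_on y_eigen _ y0_ge0.
move=> z_ge0 z_exp.
split=> [i /y0_ge0 y_ge0 | j]; rewrite !norm2E.
- have y_ge := unit_perron_entry_ge heps L_sep y_ge0 (y_eigen i) L_conn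
    (orthonormal_sqnorm y_on i).
  have comp_ge := sqnorm_component_ge n_gt0 n_bal y_on z_exp y_ge0 y_ge z_ge0.
  rewrite pmul_sqrtr ?divr_ge0 ?(ltW Q_gt0) //; apply: ler_wsqrtr.
  rewrite expr_div_n mulrAC ler_pdivrMr ?exprn_gt0 ?ltr0Sn //.
  apply: le_trans comp_ge _; rewrite mulrC ler_wpM2l ?sqnorm_ge0 // -natrX ler_nat.
  nia.
- rewrite pmul_sqrtr ?ler0n //; apply: ler_wsqrtr.
  apply: le_trans (sqnorm_component_le n_gt0 n_bal y_on z_exp j) _.
  by rewrite ler_wpM2r ?sqnorm_ge0 // -natrX ler_nat; nia.
Qed.
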